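(* Let $\boldsymbol\mu>\mathbf 0$ and assume $\mathbf I-\mathbf G$ is irreducible for every $\mathbf G\in\mathcal G(\boldsymbol\mu)$. Let $\Omega_1,\dots,\Omega_M\subseteq\{1,\dots,N\}$ be nonempty and $\bar p_{\Omega_1},\dots,\bar p_{\Omega_M}>0$, and let $\mathcal P=\{\mathbf p\in\mathbb R^N:\mathbf p\geq\mathbf 0,\ \sum_{i\in\Omega_m}p_i\leq\bar p_{\Omega_m},\ m=1,\dots,M\}$. Then there exists $\mathbf p\in\mathcal P$ with $\mathbf A(\boldsymbol\mu)\mathbf p\geq\mathbf n(\boldsymbol\mu)$ if and only if $$\max_{\mathbf G\in\mathcal G(\boldsymbol\mu)}\ \max_{m\in\{1,\dots,M\}}\ \lambda\Big(\psi\big(\mathbf I-\mathbf G,\ \tfrac{1}{\bar p_{\Omega_m}}\mathbf n_{\mathbf G},\ \Omega_m\big)\Big)\leq 1.$$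
   Context: Multicast system: $N$ transmitters; transmitter $T_i$ has $K_i\geq1$ receivers $R_i^{k}$, $k\in\mathcal K_i=\{1,\dots,K_i\}$. Channel gains $g_{r_i^{k},t_j}\geq 0$ (from $T_j$ to $R_i^k$) with $g_{r_i^{k},t_i}>0$; noise variance $\sigma^2>0$. For $\boldsymbol\mu\in\mathbb R^N$, $\mathbf a_i^{k}(\boldsymbol\mu)\in\mathbb R^{1\times N}$ is the row vector with $i$-th entry $1$ and $j$-th entry $-\mu_i g_{r_i^{k},t_j}/g_{r_i^{k},t_i}$ for $j\neq i$; $n_i^{k}(\boldsymbol\mu)=\mu_i\sigma^2/g_{r_i^{k},t_i}$. $\mathbf A(\boldsymbol\mu)$ stacks all rows $\mathbf a_i^k(\boldsymbol\mu)$ and $\mathbf n(\boldsymbol\mu)$ the corresponding $n_i^k(\boldsymbol\mu)$. $\mathcal G(\boldsymbol\mu)$ is the set of $N\times N$ matrices whose $i$-th row is $\mathbf a_i^{k_i}(\boldsymbol\mu)$ for some $k_i\in\mathcal K_i$; for such $\mathbf G$, $\mathbf n_{\mathbf G}=(n_1^{k_1}(\boldsymbol\mu),\dots,n_N^{k_N}(\boldsymbol\mu))^T$. For a matrix $\mathbf X\in\mathbb R^{N\times N}$, a vector $\mathbf y\in\mathbb R^N$ and $\Omega\subseteq\{1,\dots,N\}$, $\psi(\mathbf X,\mathbf y,\Omega)$ is the matrix obtained from $\mathbf X$ by adding $\mathbf y$ to the $j$-th column for every $j\in\Omega$ (other columns unchanged). $\lambda(\cdot)$ is the Perron–Frobenius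 eigenvalue (spectral radius) of a nonnegative square matrix. *)

From HB Require Import structures.
From mathcomp Require Import all_boot all_order all_algebra.
Unset Printing Implicit Defensive.
Import Order.TTheory GRing.Theory Num.Theory.
Local Open Scope ring_scope.

Section Defs.
Variable R : rcfType.

(* a + b i is a complex eigenvalue of the real matrix A:  det((a+bi)I - A) = 0.
   Realified: det [[aI-A, -bI],[bI, aI-A]] = |det((a+bi)I - A)|^2. *)
Definition ceig n (A : 'M[R]_n) (a b : R) : bool :=
  \det (block_mx (a%:M - A) (- b%:M) (b%:M) (a%:M - A)) == 0.

Definition spectral_radius n (A : 'M[R]_n) (r : R) : Prop :=
  (exists a b, ceig n A a b /\ r = Num.sqrt (a ^+ 2 + b ^+ 2)) /\
  (forall a b, ceig n A a b -> Num.sqrt (a ^+ 2 + b ^+ 2) <= r).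

(* irreducible: no permutation makes X block triangular, i.e. there is no
   nonempty proper index set S with X i j = 0 for all i in S, j not in S. *)
Definition irreducible_mx n (X : 'M[R]_n) : Prop :=
  forall S : {set 'I_n}, S != set0 -> S != setT ->
    exists i j, [/\ i \in S, j \notin S & X i j != 0].

Definition psi n (X : 'M[R]_n) (y : 'cV[R]_n) (Om : {set 'I_n}) : 'M[R]_n :=
  \matrix_(i, j) (X i j + (if j \in Om then y i 0 else 0)).

Variables (N : nat) (K : 'I_N -> nat)
  (g : forall i : 'I_N, 'I_(K i) -> 'I_N -> R) (sigma2 : R).

Definition a_row (mu : 'I_N -> R) (i : 'I_N) (k : 'I_(K i)) : 'rV[R]_N :=
  \row_j (if j == i then 1 else - (mu i * g i k j / g i k i)).

Definition n_elt (mu : 'I_N -> R) (i : 'I_N) (k : 'I_(K i)) : R :=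
  mu i * sigma2 / g i k i.

(* A(mu) p >= n(mu), row by row over all stacked rows (i,k) *)
Definition A_ge_n (mu : 'I_N -> R) (p : 'cV[R]_N) : Prop :=
  forall i (k : 'I_(K i)), n_elt mu i k <= (a_row mu i k *m p) 0 0.

(* G in calG(mu), determined by a choice kk i in K_i of receiver per row *)
Definition Gmat (mu : 'I_N -> R) (kk : forall i : 'I_N, 'I_(K i)) : 'M[R]_N :=
  \matrix_(i, j) a_row mu i (kk i) 0 j.

Definition nG (mu : 'I_N -> R) (kk : forall i : 'I_N, 'I_(K i)) : 'cV[R]_N :=
  \col_i n_elt mu i (kk i).

End Defs.

(* Perron's theorem is proved without limits, so that it holds over any real
   closed field.  Call t dominating for C >= 0 when C v < t v for some v > 0;
   then t - C is a nonsingular M-matrix and (t - C)^-1 1 = q(t) / chi(t) > 0,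
   where q = adj(X - C) 1 and chi is the characteristic polynomial.  Going down
   from a large dominating t to the largest root tau of chi * prod_i q_i, this
   vector stays positive while tau is not dominating; after cancelling the
   common factors X - tau of q and chi, q(tau) is a nonnegative eigenvector for
   tau.  If C is irreducible this eigenvector is positive, and the modulus
   bound for eigenvectors of nonnegative matrices makes tau the spectral radius.

   For the theorem, a feasible power vector p satisfies C p <= p for every
   matrix C = psi(I - G, n_G / pbar_m, Omega_m), which bounds the spectral
   radius by 1.  Conversely, the Perron vector of each such C, suitably scaled,
   meets the rate constraints of the receiver choice G within budget m; so the
   least such vector G^-1 n_G is within all budgets, and a receiver choice
   maximising the total power of G^-1 n_G meets every receiver's constraint,
   since swapping in a violated receiver would increase that total. *)

From HB Require Import structures.
From mathcomp Require Import all_boot all_order all_algebra.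
From mathcomp Require Import polyrcf complex lra ring.
Import Order.TTheory GRing.Theory Num.Theory.
Local Open Scope ring_scope.
Set Implicit Arguments.
Unset Strict Implicit.

Lemma mulmx_col_ge0 (R : numDomainType) m n (A : 'M[R]_(m, n)) (w : 'cV[R]_n) :
  (forall i j, 0 <= A i j) -> (forall j, 0 <= w j 0) ->
  forall i, 0 <= (A *m w) i 0.
Proof. by move=> A0 w0 i; rewrite mxE sumr_ge0 // => j _; rewrite mulr_ge0. Qed.

Section ZMatrix.
Variables (R : realFieldType) (n : nat) (G : 'M[R]_n) (v : 'cV[R]_n).
Hypotheses (G_offdiag : forall i j, i != j -> G i j <= 0)
  (v_gt0 : forall i, 0 < v i 0) (Gv_gt0 : forall i, 0 < (G *m v) i 0).

Lemma Zmatrix_monotone (w : 'cV[R]_n) :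
  (forall i, 0 <= (G *m w) i 0) -> forall i, 0 <= w i 0.
Proof.
move=> Gw_ge0 i; rewrite leNgt; apply/negP => wi_lt0.
pose ratio j := w j 0 / v j 0.
have [i1 _ ratio_min] := @arg_minP _ R _ i (fun=> true) ratio isT.
set t := ratio i1.
have t_lt0 : t < 0.
  by apply: le_lt_trans (ratio_min i isT) _; rewrite pmulr_llt0 ?invr_gt0.
have tv_le_w j : t * v j 0 <= w j 0 by rewrite -ler_pdivlMr //; exact: ratio_min.
(* at the index minimising w_j / v_j, the off-diagonal signs give (G w) <= t (G v) < 0 *)
have : (G *m w) i1 0 <= t * (G *m v) i1 0.
  rewrite !mxE mulr_sumr; apply: ler_sum => j _.
  have [->|ji1] := eqVneq j i1; first by rewrite /t /ratio mulrCA divfK ?gt_eqF.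
  by rewrite mulrCA ler_wnM2l ?tv_le_w // G_offdiag // eq_sym.
by rewrite leNgt (lt_le_trans _ (Gw_ge0 i1)) // nmulr_rlt0.
Qed.

Lemma Zmatrix_kernel (w : 'cV[R]_n) : G *m w = 0 -> w = 0.
Proof.
move=> Gw0; apply/matrixP => i j; rewrite (ord1 j) mxE; apply/eqP.
have w_ge0 : 0 <= w i 0 by apply: Zmatrix_monotone => k; rewrite Gw0 mxE.
have : 0 <= (- w) i 0 by apply: Zmatrix_monotone => k; rewrite mulmxN Gw0 oppr0 mxE.
by rewrite mxE oppr_ge0 eq_le w_ge0 => ->.
Qed.

Lemma Zmatrix_unit : G \in unitmx.
Proof.
rewrite unitmxE unitfE -det_tr; apply/negP => /det0P [u u_neq0 uGT0].
have /Zmatrix_kernel uT0 : G *m u^T = 0 by rewrite -[LHS]trmxK trmx_mul trmxK uGT0 trmx0.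
by move: u_neq0; rewrite -[u]trmxK uT0 trmx0 eqxx.
Qed.

End ZMatrix.

Section Dominating.
Variables (R : realFieldType) (n : nat) (C : 'M[R]_n).
Hypothesis C_ge0 : forall i j, 0 <= C i j.

(* t exceeds the Perron root of C *)
Definition dominating (t : R) := exists2 v : 'cV[R]_n,
  forall i, 0 < v i 0 & forall i, 0 < ((t%:M - C) *m v) i 0.

Lemma scalar_subC_mulmxE t (w : 'cV[R]_n) i :
  ((t%:M - C) *m w) i 0 = t * w i 0 - (C *m w) i 0.
Proof. by rewrite mulmxBl mul_scalar_mx !mxE. Qed.

Lemma scalar_subC_offdiag t i j : i != j -> (t%:M - C) i j <= 0.
Proof. by move=> ij; rewrite !mxE (negPf ij) mulr0n sub0r oppr_le0. Qed.

Lemma dominating_gt0 (i0 : 'I_n) t : dominating t -> 0 < t.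
Proof.
case=> v v_gt0 /(_ i0); rewrite scalar_subC_mulmxE subr_gt0 => Cv_lt.
have := le_lt_trans (mulmx_col_ge0 C_ge0 (fun j => ltW (v_gt0 j)) i0) Cv_lt.
by rewrite pmulr_lgt0.
Qed.

Lemma solution_gt0 t (w : 'cV[R]_n) : (forall i, 0 <= w i 0) ->
  (forall i, ((t%:M - C) *m w) i 0 = 1) -> forall i, 0 < w i 0.
Proof.
move=> w_ge0 w_sol i; rewrite lt_def w_ge0 andbT.
have : 0 < t * w i 0.
  by rewrite -[_ * _](subrK ((C *m w) i 0)) -scalar_subC_mulmxE w_sol
    ltr_pwDl // mulmx_col_ge0.
by apply: contraTneq => ->; rewrite mulr0 ltxx.
Qed.

Lemma dominating_solution_gt0 t (w : 'cV[R]_n) : dominating t ->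
  (forall i, ((t%:M - C) *m w) i 0 = 1) -> forall i, 0 < w i 0.
Proof.
case=> v v_gt0 tCv_gt0 w_sol.
have w_ge0 : forall i, 0 <= w i 0.
  by apply: (Zmatrix_monotone (@scalar_subC_offdiag t) v_gt0 tCv_gt0) => i; rewrite w_sol.
exact: solution_gt0 w_ge0 w_sol.
Qed.

Lemma horner_char_poly t : (char_poly C).[t] = \det (t%:M - C).
Proof.
rewrite /char_poly -horner_evalE -det_map_mx; congr (\det _).
apply/matrixP => i j; rewrite !mxE /= horner_evalE hornerD hornerN hornerC.
by rewrite hornerMn hornerX.
Qed.

Lemma dominating_char_poly_neq0 t : dominating t -> (char_poly C).[t] != 0.
Proof.
case=> v v_gt0 tCv_gt0; rewrite horner_char_poly -unitfE -unitmxE.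
exact: (Zmatrix_unit (@scalar_subC_offdiag t) v_gt0 tCv_gt0).
Qed.

(* q / e is a rational solution of (X - C) x = 1, i.e. (X - C)^-1 1 = q / e. *)
Definition solves_resolvent (q : 'I_n -> {poly R}) (e : {poly R}) :=
  forall i, 'X * q i - \sum_j (C i j)%:P * q j = e.

Definition resolvent_poly (i : 'I_n) : {poly R} :=
  (\adj (char_poly_mx C) *m (const_mx 1 : 'cV[{poly R}]_n)) i 0.

Lemma char_poly_resolvent : solves_resolvent resolvent_poly (char_poly C).
Proof.
move=> i.
have := congr1 (fun A => (A *m (const_mx 1 : 'cV[{poly R}]_n)) i 0) (mul_mx_adj (char_poly_mx C)).
rewrite /= -mulmxA /char_poly_mx mulmxBl !mul_scalar_mx !mxE mulr1 /char_poly /char_poly_mx => <-.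
rewrite /resolvent_poly; congr (_ - _).
- by rewrite /char_poly_mx [in LHS]mxE.
- by apply: eq_bigr => j _; rewrite /char_poly_mx [X in _ = X * _]mxE.
Qed.

Lemma solves_resolvent_horner q e t : solves_resolvent q e ->
  forall i, ((t%:M - C) *m \col_j (q j).[t]) i 0 = e.[t].
Proof.
move=> qe i; rewrite scalar_subC_mulmxE -(qe i) hornerD hornerN hornerM hornerX.
rewrite horner_sum !mxE; congr (_ - _); apply: eq_bigr => j _.
by rewrite hornerM hornerC mxE.
Qed.

Lemma resolvent_solution q e t : solves_resolvent q e -> e.[t] != 0 ->
  forall i, ((t%:M - C) *m ((e.[t])^-1 *: \col_j (q j).[t])) i 0 = 1.
Proof.
by move=> qe e_neq0 i; rewrite -scalemxAr mxE (solves_resolvent_horner _ qe) mulVf.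
Qed.

Lemma dominating_of_resolvent q e t : solves_resolvent q e -> e.[t] != 0 ->
  (forall i, 0 <= (q i).[t] * e.[t]) -> dominating t.
Proof.
move=> qe e_neq0 qe_ge0; have w_sol := resolvent_solution qe e_neq0.
exists ((e.[t])^-1 *: \col_j (q j).[t]); last by move=> i; rewrite w_sol.
apply: solution_gt0 w_sol => i; rewrite !mxE mulrC.
have e2_gt0 : 0 < e.[t] ^+ 2 by rewrite lt_def sqrf_eq0 e_neq0 sqr_ge0.
by rewrite -(pmulr_lge0 _ e2_gt0) expr2 mulrA divfK.
Qed.

Lemma dominating_resolvent_gt0 q e t : dominating t -> solves_resolvent q e ->
  e.[t] != 0 -> forall i, 0 < (q i).[t] * e.[t].
Proof.
move=> dom_t qe e_neq0 i.
have := dominating_solution_gt0 dom_t (resolvent_solution qe e_neq0) i.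
rewrite !mxE mulrC => w_gt0.
have e2_gt0 : 0 < e.[t] ^+ 2 by rewrite lt_def sqrf_eq0 e_neq0 sqr_ge0.
by have := mulr_gt0 w_gt0 e2_gt0; rewrite expr2 mulrA divfK.
Qed.

Lemma dominating_resolvent_poly_gt0 t : dominating t ->
  forall i, 0 < (resolvent_poly i).[t] * (char_poly C).[t].
Proof.
move=> dom_t.
exact: dominating_resolvent_gt0 dom_t char_poly_resolvent (dominating_char_poly_neq0 dom_t).
Qed.

End Dominating.

Lemma noroot_horner_ge0 (R : rcfType) (p : {poly R}) x b : x <= b ->
  {in `]x, b], forall y, ~~ root p y} -> 0 < p.[b] -> 0 <= p.[x].
Proof.
move=> le_xb p_noroot pb_gt0; rewrite leNgt; apply/negP => px_lt0.
have sign_change : p.[x] * p.[b] < 0 by rewrite nmulr_rlt0.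
have [y y_in y_root] := poly_ivtoo le_xb sign_change.
by move: y_in (p_noroot y); rewrite y_root !in_itv /= => /andP[-> /ltW ->] /(_ isT).
Qed.

Lemma noroot_horner_gt0 (R : rcfType) (p : {poly R}) x b : x <= b ->
  {in `[x, b], forall y, ~~ root p y} -> 0 < p.[b] -> 0 < p.[x].
Proof.
move=> le_xb p_noroot pb_gt0; rewrite lt_def -rootE p_noroot ?in_itv /= ?lexx ?le_xb //.
apply: noroot_horner_ge0 le_xb _ pb_gt0 => y; rewrite !in_itv /= => /andP[/ltW xy yb].
by apply: p_noroot; rewrite in_itv /= xy yb.
Qed.

Section PerronFrobenius.
Variables (R : rcfType) (n : nat) (C : 'M[R]_n) (i0 : 'I_n).
Hypothesis C_ge0 : forall i j, 0 <= C i j.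

Definition nonneg_eigenvector (rho : R) (v : 'cV[R]_n) :=
  [/\ v != 0, forall i, 0 <= v i 0 & C *m v = rho *: v].

Definition resolvent_pos (tau tb : R) (q : 'I_n -> {poly R}) (e : {poly R}) :=
  forall i, {in `]tau, tb], forall y, 0 < (q i).[y] * e.[y]}.

Section BoundaryEigenvector.
Variables tau tb : R.
Hypotheses (tau_lt_tb : tau < tb) (tau_not_dom : ~ dominating C tau).

Let tb_in : tb \in `]tau, tb].
Proof. by rewrite in_itv /= tau_lt_tb lexx. Qed.

Lemma resolvent_eigenvector_nonzero q e :
  solves_resolvent C q e -> resolvent_pos tau tb q e ->
  (exists i, (q i).[tau] != 0) -> exists v, nonneg_eigenvector tau v.
Proof.
move=> qe qe_pos [i1 q_i1_neq0].
have q_noroot i : {in `]tau, tb], forall y, ~~ root (q i) y}.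
  by move=> y /(qe_pos i); rewrite rootE; apply: contraTneq => ->; rewrite mul0r ltxx.
have e_noroot : {in `]tau, tb], forall y, ~~ root e y}.
  by move=> y /(qe_pos i0); rewrite rootE; apply: contraTneq => ->; rewrite mulr0 ltxx.
have e_tb_neq0 : e.[tb] != 0 by rewrite -rootE e_noroot.
have e_tau0 : e.[tau] = 0.
  apply/eqP/negPn/negP => e_tau_neq0; apply: tau_not_dom.
  apply: (dominating_of_resolvent C_ge0 qe e_tau_neq0) => i; rewrite -hornerM.
  apply: noroot_horner_ge0 (ltW tau_lt_tb) _ _; last by rewrite hornerM qe_pos.
  by move=> y y_in; rewrite rootM negb_or q_noroot ?e_noroot.
exists (e.[tb] *: \col_j (q j).[tau]); split.
- rewrite scaler_eq0 negb_or e_tb_neq0 /=.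
  by apply: contra q_i1_neq0 => /eqP/matrixP/(_ i1 0); rewrite !mxE => ->.
- move=> i; rewrite !mxE -hornerZ.
  apply: noroot_horner_ge0 (ltW tau_lt_tb) _ _; last by rewrite hornerZ mulrC qe_pos.
  by move=> y y_in; rewrite rootZ // q_noroot.
- have : (tau%:M - C) *m \col_j (q j).[tau] = 0.
    by apply/matrixP => i j; rewrite (ord1 j) (solves_resolvent_horner _ qe) e_tau0 mxE.
  rewrite mulmxBl mul_scalar_mx => /eqP; rewrite subr_eq0 => /eqP tau_eig.
  by rewrite -scalemxAr -tau_eig scalerA mulrC -scalerA.
Qed.

Lemma resolvent_divXsubC q e :
  solves_resolvent C q e -> resolvent_pos tau tb q e -> (forall i, (q i).[tau] = 0) ->
  let D := 'X - tau%:P in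
  solves_resolvent C (fun i => q i %/ D) (e %/ D) /\
  resolvent_pos tau tb (fun i => q i %/ D) (e %/ D).
Proof.
move=> qe qe_pos q_tau0 D.
have D_neq0 : D != 0 by rewrite polyXsubC_eq0.
have e_tau0 : e.[tau] = 0.
  rewrite -(solves_resolvent_horner _ qe i0).
  have -> : \col_j (q j).[tau] = 0 by apply/matrixP => j k; rewrite !mxE q_tau0.
  by rewrite mulmx0 mxE.
have qK i : q i %/ D * D = q i by rewrite divpK // dvdp_XsubCl rootE q_tau0.
have eK : e %/ D * D = e by rewrite divpK // dvdp_XsubCl rootE e_tau0.
split.
  move=> i; apply: (mulIf D_neq0).
  rewrite eK -(qe i) mulrBl -mulrA qK mulr_suml; congr (_ - _).
  by apply: eq_bigr => j _; rewrite -mulrA qK.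
move=> i y y_in; have := qe_pos i y y_in.
rewrite -[in X in X -> _](qK i) -[in X in X -> _]eK !hornerM hornerXsubC mulrACA.
rewrite pmulr_lgt0 // -expr2 lt_def sqrf_eq0 sqr_ge0 subr_eq0 andbT.
by move: y_in; rewrite in_itv /= => /andP[/gt_eqF ->].
Qed.

Lemma resolvent_eigenvector q e :
  solves_resolvent C q e -> resolvent_pos tau tb q e ->
  exists v, nonneg_eigenvector tau v.
Proof.
have [s] := ubnP (size (q i0)); elim: s q e => // s IHs q e size_lt qe qe_pos.
have q_i0_neq0 : q i0 != 0.
  by apply: contraTneq (qe_pos i0 tb tb_in) => ->; rewrite horner0 mul0r ltxx.
case: (pickP (fun i => (q i).[tau] != 0)) => [i1 q_i1_neq0|q_tau0].
  by apply: resolvent_eigenvector_nonzero qe qe_pos _; exists i1.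
have [] := resolvent_divXsubC qe qe_pos (fun i => eqP (negbFE (q_tau0 i))).
apply: IHs; rewrite size_divp ?polyXsubC_eq0 // size_XsubC subn1 -ltnS prednK //.
by rewrite size_poly_gt0.
Qed.

End BoundaryEigenvector.

Lemma dominating_sum_entries : dominating C (1 + \sum_i \sum_j C i j).
Proof.
exists (const_mx 1) => i; first by rewrite mxE ltr01.
rewrite scalar_subC_mulmxE !mxE mulr1 subr_gt0 ltr_pwDl //.
under eq_bigr do rewrite mxE mulr1.
rewrite [leRHS](bigD1 i) //= lerDl.
by apply: sumr_ge0 => k _; apply: sumr_ge0 => j _.
Qed.

(* Between consecutive roots of this polynomial, each entry
   (resolvent_poly C i).[t] / (char_poly C).[t] of (t - C)^-1 1 keeps its sign. *)
Definition resolvent_roots_poly := \prod_i (resolvent_poly C i * char_poly C).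

Lemma dominating_noroot t : dominating C t -> ~~ root resolvent_roots_poly t.
Proof.
move=> dom_t; rewrite rootE horner_prod; apply/prodf_neq0 => i _.
by rewrite hornerM gt_eqF // dominating_resolvent_poly_gt0.
Qed.

Lemma resolvent_pos_noroot tau tb : dominating C tb ->
  {in `]tau, tb], forall y, ~~ root resolvent_roots_poly y} ->
  resolvent_pos tau tb (resolvent_poly C) (char_poly C).
Proof.
move=> dom_tb Q_noroot i y; rewrite in_itv /= => /andP[tau_y y_tb]; rewrite -hornerM.
apply: noroot_horner_gt0 y_tb _ _; last by rewrite hornerM dominating_resolvent_poly_gt0.
move=> z; rewrite in_itv /= => /andP[y_z z_tb].
apply: contra _ (Q_noroot z _); last by rewrite in_itv /= (lt_le_trans tau_y y_z).
by rewrite !rootE horner_prod (bigD1 i) //= => /eqP ->; rewrite mul0r.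
Qed.

Theorem nonneg_eigenvector_exists :
  exists rho v, 0 <= rho /\ nonneg_eigenvector rho v.
Proof.
have dom_tb := dominating_sum_entries; set tb := 1 + _ in dom_tb.
have tb_gt0 : 0 < tb := dominating_gt0 C_ge0 i0 dom_tb.
set Q := resolvent_roots_poly.
have Q_neq0 : Q != 0.
  by apply: contraNneq (dominating_noroot dom_tb); rewrite -/Q => ->; rewrite root0.
pose tau := prev_root Q 0 tb.
have tau_lt_tb : tau < tb := prev_root_lt tb_gt0 Q_neq0.
have tau_ge0 : 0 <= tau.
  by have := prev_root_in Q 0 tb; rewrite (min_l (ltW tb_gt0)) in_itv => /andP[].
have tau_root : root Q tau \/ tau = 0.
  rewrite /tau; case: prev_rootP => [/eqP Q0 | y _ /eqP y_root _ _ | c _ -> _].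
  - by rewrite Q0 in Q_neq0.
  - by left.
  - by right; rewrite (min_l (ltW tb_gt0)).
have Q_noroot : {in `]tau, tb], forall y, ~~ root Q y}.
  move=> y; rewrite in_itv /= le_eqVlt => /andP[tau_y /orP[/eqP -> | y_tb]].
    exact: dominating_noroot dom_tb.
  by apply: (@prev_noroot _ Q 0 tb); rewrite in_itv /= tau_y.
have tau_not_dom : ~ dominating C tau.
  move=> dom_tau; have := dominating_noroot dom_tau.
  case: tau_root => [-> // | tau0].
  by move: (dominating_gt0 C_ge0 i0 dom_tau); rewrite tau0 ltxx.
have pos := resolvent_pos_noroot dom_tb Q_noroot.
have [v v_eig] := resolvent_eigenvector tau_lt_tb tau_not_dom (char_poly_resolvent C) pos.
by exists tau, v.
Qed.

End PerronFrobenius.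

Lemma subinvariant_le_dominant (R : realFieldType) n (C : 'M[R]_n)
    (v w : 'cV[R]_n) s t :
  (forall i j, 0 <= C i j) -> (forall i, 0 < v i 0) ->
  (forall i, (C *m v) i 0 <= t * v i 0) ->
  (forall i, 0 <= w i 0) -> w != 0 -> (forall i, s * w i 0 <= (C *m w) i 0) ->
  s <= t.
Proof.
move=> C_ge0 v_gt0 Cv_le w_ge0 w_neq0 Cw_ge.
have [k wk_neq0] : exists k, w k 0 != 0.
  apply/existsP; apply: contraNT w_neq0; rewrite negb_exists => /forallP w0.
  by apply/eqP/matrixP => i j; rewrite (ord1 j) mxE; apply/eqP/negbNE/w0.
pose ratio j := w j 0 / v j 0.
have [i _ ratio_max] := @arg_maxP _ R _ k (fun=> true) ratio isT.
have ratio_i_gt0 : 0 < ratio i.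
  by apply: lt_le_trans (ratio_max k isT); rewrite divr_gt0 // lt_def wk_neq0 w_ge0.
have wi_gt0 : 0 < w i 0 by move: ratio_i_gt0; rewrite pmulr_lgt0 // invr_gt0.
(* at the index maximising w_j / v_j, s w_i <= (C w)_i <= ratio_i (C v)_i <= t w_i *)
rewrite -(ler_pM2r wi_gt0); apply: le_trans (Cw_ge i) _.
apply: (@le_trans _ _ (ratio i * (C *m v) i 0)).
  rewrite !mxE mulr_sumr; apply: ler_sum => j _; rewrite mulrCA ler_wpM2l //.
  by rewrite -ler_pdivrMr //; exact: ratio_max.
have -> : t * w i 0 = ratio i * (t * v i 0) by rewrite /ratio mulrCA divfK ?gt_eqF.
by rewrite ler_wpM2l // ltW.
Qed.

Section ComplexEigenvalues.
Variable R : rcfType.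
Local Open Scope complex_scope.

Lemma complex_sum (I : finType) (f g : I -> R) :
  (\sum_i f i) +i* (\sum_i g i) = \sum_i ((f i +i* g i) : R[i]).
Proof.
by apply: (big_rec3 (fun s1 s2 (s3 : R[i]) => s1 +i* s2 = s3)) => // i a1 a2 a3 _ <-.
Qed.

Lemma normc_scale (c x y : R) : 0 <= c ->
  Normc.normc ((c * x) +i* (c * y)) = c * Normc.normc (x +i* y).
Proof.
move=> c_ge0; have -> : (c * x) +i* (c * y) = (c +i* 0) * (x +i* y).
  by rewrite /=; congr (_ +i* _); lra.
by rewrite Normc.normcM /= expr0n /= addr0 sqrtr_sqr ger0_norm.
Qed.

(* If C (x + i y) = (a + i b) (x + i y), the moduli |x_j + i y_j| form a
   subinvariant vector for |a + i b|, by the triangle inequality. *)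
Lemma ceig_subinvariant n (C : 'M[R]_n) a b :
  (forall i j, 0 <= C i j) -> ceig R n C a b ->
  exists w : 'cV[R]_n, [/\ forall i, 0 <= w i 0, w != 0 &
    forall i, Num.sqrt (a ^+ 2 + b ^+ 2) * w i 0 <= (C *m w) i 0].
Proof.
move=> C_ge0; rewrite /ceig -det_tr tr_block_mx => /det0P [u u_neq0 u_ker].
rewrite -(hsubmxK u) in u_neq0 u_ker.
move: (lsubmx u) (rsubmx u) u_neq0 u_ker => x y xy_neq0.
rewrite mul_row_block => /eqP; rewrite row_mx_eq0 => /andP[/eqP re_eq /eqP im_eq].
have sumCT (z : 'rV[R]_n) j : \sum_k z 0 k * C^T k j = \sum_k C j k * z 0 k.
  by apply: eq_bigr => k _; rewrite mxE mulrC.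
have Cx j : \sum_k C j k * x 0 k = a * x 0 j - b * y 0 j.
  move: (congr1 (fun A : 'rV[R]_n => A 0 j) re_eq).
  rewrite !linearB /= !tr_scalar_mx linearN /= tr_scalar_mx mulmxN !mul_mx_scalar.
  by rewrite !mxE sumCT => ?; lra.
have Cy j : \sum_k C j k * y 0 k = b * x 0 j + a * y 0 j.
  move: (congr1 (fun A : 'rV[R]_n => A 0 j) im_eq).
  rewrite !linearB /= !tr_scalar_mx !mul_mx_scalar !mxE sumCT => ?; lra.
exists (\col_j Normc.normc (x 0 j +i* y 0 j)); split.
- by move=> i; rewrite mxE /= sqrtr_ge0.
- apply: contraNneq xy_neq0 => /matrixP w0.
  have xy0 j : x 0 j = 0 /\ y 0 j = 0.
    by have := w0 j 0; rewrite !mxE => /Normc.eq0_normc [-> ->].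
  by rewrite row_mx_eq0; apply/andP; split; apply/eqP/matrixP => i j;
    rewrite (ord1 i) mxE; case: (xy0 j).
move=> i; rewrite !mxE.
have -> : Num.sqrt (a ^+ 2 + b ^+ 2) * Normc.normc (x 0 i +i* y 0 i) =
    Normc.normc ((\sum_k C i k * x 0 k) +i* (\sum_k C i k * y 0 k)).
  rewrite Cx Cy -[Num.sqrt _]/(Normc.normc (a +i* b)) -Normc.normcM /=.
  by congr (Num.sqrt (_ + _ ^+ 2)); lra.
rewrite complex_sum.
apply: le_trans (@ler_norm_sum R (Rcomplex R) _ (index_enum 'I_n)
  (fun k => (C i k * x 0 k) +i* (C i k * y 0 k)) predT) _.
by apply: ler_sum => k _; rewrite -[`|_|]/(Normc.normc _) normc_scale // mxE.
Qed.

End ComplexEigenvalues.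

Section SpectralRadius.
Variables (R : rcfType) (n : nat) (C : 'M[R]_n).
Hypothesis C_ge0 : forall i j, 0 <= C i j.

Lemma ceig_norm_le (v : 'cV[R]_n) t a b :
  (forall i, 0 < v i 0) -> (forall i, (C *m v) i 0 <= t * v i 0) ->
  ceig R n C a b -> Num.sqrt (a ^+ 2 + b ^+ 2) <= t.
Proof.
move=> v_gt0 Cv_le /(ceig_subinvariant C_ge0) [w [w_ge0 w_neq0 Cw_ge]].
exact: subinvariant_le_dominant C_ge0 v_gt0 Cv_le w_ge0 w_neq0 Cw_ge.
Qed.

Lemma ceig_eigenvector (v : 'cV[R]_n) rho :
  v != 0 -> C *m v = rho *: v -> ceig R n C rho 0.
Proof.
move=> v_neq0 v_eig; rewrite /ceig.
have -> : (0 : R)%:M = 0 :> 'M[R]_n by apply/matrixP => i j; rewrite !mxE mul0rn.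
rewrite oppr0 det_ublock mulf_eq0 -det_tr; apply/orP; left; apply/det0P; exists v^T.
  by apply: contraNneq v_neq0 => vT0; rewrite -[v]trmxK vT0 trmx0.
by rewrite -trmx_mul mulmxBl mul_scalar_mx v_eig subrr trmx0.
Qed.

Lemma spectral_radius_pos_eigenvector (i0 : 'I_n) (v : 'cV[R]_n) rho :
  (forall i, 0 < v i 0) -> C *m v = rho *: v -> 0 <= rho ->
  spectral_radius R n C rho.
Proof.
move=> v_gt0 v_eig rho_ge0; split.
  exists rho, 0; split; last by rewrite expr0n /= addr0 sqrtr_sqr ger0_norm.
  apply: ceig_eigenvector v_eig.
  by apply: contraTneq (v_gt0 i0) => ->; rewrite mxE ltxx.
by move=> a b; apply: ceig_norm_le v_gt0 _ => i; rewrite v_eig mxE.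
Qed.

Lemma irreducible_eigenvector_gt0 rho (v : 'cV[R]_n) :
  irreducible_mx R n C -> v != 0 -> (forall i, 0 <= v i 0) ->
  C *m v = rho *: v -> forall i, 0 < v i 0.
Proof.
move=> C_irr v_neq0 v_ge0 v_eig.
pose S := [set i | v i 0 == 0].
have [S0|S_neq0] := eqVneq S set0.
  move=> i; rewrite lt_def v_ge0 andbT.
  have : i \notin S by rewrite S0 inE.
  by rewrite inE.
have S_neqT : S != setT.
  apply: contraNneq v_neq0 => ST; apply/eqP/matrixP => i j; rewrite (ord1 j) mxE.
  have : i \in S by rewrite ST inE.
  by rewrite inE => /eqP.
have [i [j [iS jS Cij_neq0]]] := C_irr S S_neq0 S_neqT.
move: iS jS; rewrite !inE => /eqP vi0 vj_neq0.
(* a zero entry of v forces zero entries at all its C-neighbours *)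
have : (C *m v) i 0 = 0 by rewrite v_eig mxE vi0 mulr0.
rewrite mxE (bigD1 j) //= => /eqP; rewrite gt_eqF //.
apply: ltr_pwDl; last by apply: sumr_ge0 => k _; rewrite mulr_ge0.
by rewrite mulr_gt0 // lt_def ?Cij_neq0 ?vj_neq0 ?C_ge0 ?v_ge0.
Qed.

End SpectralRadius.

Section Psi.
Variables (R : rcfType) (n : nat) (X : 'M[R]_n) (y : 'cV[R]_n) (Om : {set 'I_n}).
Hypotheses (X_ge0 : forall i j, 0 <= X i j) (y_ge0 : forall i, 0 <= y i 0).

Lemma psi_ge0 i j : 0 <= psi R n X y Om i j.
Proof. by rewrite mxE addr_ge0 //; case: ifP. Qed.

Lemma psi_irreducible : irreducible_mx R n X -> irreducible_mx R n (psi R n X y Om).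
Proof.
move=> X_irr S S_neq0 S_neqT; have [i [j [iS jS Xij_neq0]]] := X_irr S S_neq0 S_neqT.
exists i, j; split => //; rewrite mxE gt_eqF // ltr_wpDr ?lt_def ?Xij_neq0 ?X_ge0 //.
by case: ifP.
Qed.

Lemma psi_mulmx (p : 'cV[R]_n) i :
  (psi R n X y Om *m p) i 0 = (X *m p) i 0 + y i 0 * \sum_(j in Om) p j 0.
Proof.
rewrite !mxE mulr_sumr [Y in _ + Y]big_mkcond -big_split /=.
by apply: eq_bigr => j _; rewrite mxE mulrDl; case: ifP; rewrite ?mul0r.
Qed.

End Psi.

(* otherwise the transmitter index of g would become implicit *)
Unset Implicit Arguments.

Section Network.
Variables (R : rcfType) (N : nat) (K : 'I_N -> nat)
  (g : forall i : 'I_N, 'I_(K i) -> 'I_N -> R) (sigma2 : R)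
  (M : nat) (Om : 'I_M -> {set 'I_N}) (pbar : 'I_M -> R) (mu : 'I_N -> R).
Hypotheses (K_gt0 : forall i, (0 < K i)%N) (g_ge0 : forall i k j, 0 <= g i k j)
  (g_diag_gt0 : forall i k, 0 < g i k i) (sigma2_gt0 : 0 < sigma2)
  (mu_gt0 : forall i, 0 < mu i) (pbar_gt0 : forall m, 0 < pbar m).

Local Notation Gm kk := (Gmat R N K g mu kk).
Local Notation nv kk := (nG R N K g sigma2 mu kk).
Local Notation ar := (a_row R N K g mu).
Local Notation ne := (n_elt R N K g sigma2 mu).
Local Notation Cm kk m := (psi R N (1%:M - Gm kk) ((pbar m)^-1 *: nv kk) (Om m)).
Local Notation receiver_choice := {dffun forall i : 'I_N, 'I_(K i)}.

Definition feasible (p : 'cV[R]_N) := [/\ forall i, 0 <= p i 0,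
  forall m, \sum_(i in Om m) p i 0 <= pbar m & A_ge_n R N K g sigma2 mu p].

Lemma n_elt_gt0 i k : 0 < ne i k.
Proof. by rewrite /n_elt divr_gt0 // mulr_gt0. Qed.

Lemma a_row_offdiag i k j : j != i -> ar i k 0 j = - (mu i * g i k j / g i k i).
Proof. by move=> ji; rewrite mxE (negPf ji). Qed.

Lemma a_row_offdiag_le0 i k j : j != i -> ar i k 0 j <= 0.
Proof. by move=> ji; rewrite a_row_offdiag // oppr_le0 divr_ge0 ?mulr_ge0 // ltW. Qed.

Lemma a_row_mulmx_le (p : 'cV[R]_N) i k : (forall j, 0 <= p j 0) ->
  (ar i k *m p) 0 0 <= p i 0.
Proof.
move=> p_ge0; rewrite mxE (bigD1 i) //= mxE eqxx mul1r -[leRHS]addr0 lerD2l.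
by apply: sumr_le0 => j ji; rewrite mulr_le0_ge0 // a_row_offdiag_le0.
Qed.

Lemma Gmat_mulmx kk (p : 'cV[R]_N) i : (Gm kk *m p) i 0 = (ar i (kk i) *m p) 0 0.
Proof. by rewrite !mxE; apply: eq_bigr => j _; rewrite mxE. Qed.

Lemma Gmat_offdiag_le0 kk i j : i != j -> Gm kk i j <= 0.
Proof. by move=> ij; rewrite mxE a_row_offdiag_le0 // eq_sym. Qed.

Lemma I_Gmat_ge0 kk i j : 0 <= (1%:M - Gm kk) i j.
Proof.
rewrite !mxE; case: (eqVneq i j) => [_|ij]; first by rewrite subrr.
by rewrite sub0r opprK divr_ge0 ?mulr_ge0 // ltW.
Qed.

Lemma scaled_nG_ge0 kk m i : 0 <= ((pbar m)^-1 *: nv kk) i 0.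
Proof. by rewrite !mxE mulr_ge0 ?invr_ge0 ?ltW ?n_elt_gt0. Qed.

Lemma psi_network_ge0 kk m i j : 0 <= Cm kk m i j.
Proof. exact: psi_ge0 (I_Gmat_ge0 kk) (scaled_nG_ge0 kk m) i j. Qed.

Lemma psi_network_mulmx kk m (p : 'cV[R]_N) i : (Cm kk m *m p) i 0 =
  p i 0 - (Gm kk *m p) i 0 + (pbar m)^-1 * ne i (kk i) * \sum_(j in Om m) p j 0.
Proof. by rewrite psi_mulmx mulmxBl mul1mx !mxE. Qed.

Lemma feasible_spectral_le1 p : feasible p ->
  forall kk m r, spectral_radius R N (Cm kk m) r -> r <= 1.
Proof.
case=> p_ge0 p_sum p_A kk m r [[a [b [ab_eig ->]]] _].
have p_gt0 i : 0 < p i 0.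
  apply: lt_le_trans (n_elt_gt0 i (Ordinal (K_gt0 i))) _.
  exact: le_trans (p_A i _) (a_row_mulmx_le p i _ p_ge0).
have Cp_le i : (Cm kk m *m p) i 0 <= 1 * p i 0.
  rewrite psi_network_mulmx mul1r.
  have Gp_ge : ne i (kk i) <= (Gm kk *m p) i 0 by rewrite Gmat_mulmx.
  have : (pbar m)^-1 * ne i (kk i) * \sum_(j in Om m) p j 0 <= ne i (kk i).
    by rewrite -mulrA mulrCA ler_piMr ?(ltW (n_elt_gt0 _ _)) // ler_pdivrMl // mulr1.
  lra.
exact: (ceig_norm_le (psi_network_ge0 kk m) p_gt0 Cp_le ab_eig).
Qed.

Definition min_power kk := invmx (Gm kk) *m nv kk.

Section SpectralCondition.
Hypotheses (M_gt0 : (0 < M)%N) (Om_neq0 : forall m, Om m != set0)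
  (I_Gmat_irreducible : forall kk, irreducible_mx R N (1%:M - Gm kk))
  (spectral_le1 : forall kk m r, spectral_radius R N (Cm kk m) r -> r <= 1).

Lemma choice_feasible kk m : exists v : 'cV[R]_N, [/\ forall i, 0 <= v i 0,
  forall i, ne i (kk i) <= (Gm kk *m v) i 0 & \sum_(i in Om m) v i 0 <= pbar m].
Proof.
have [i0 i0_in] := set0Pn _ (Om_neq0 m).
have C_ge0 := psi_network_ge0 kk m.
have [rho [v [rho_ge0 [v_neq0 v_ge0 v_eig]]]] := nonneg_eigenvector_exists i0 C_ge0.
have C_irr := psi_irreducible (Om m) (I_Gmat_ge0 kk) (scaled_nG_ge0 kk m) (I_Gmat_irreducible kk).
have v_gt0 := irreducible_eigenvector_gt0 C_ge0 C_irr v_neq0 v_ge0 v_eig.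
have rho_le1 := spectral_le1 _ _ _ (spectral_radius_pos_eigenvector C_ge0 i0 v_gt0 v_eig rho_ge0).
set s := \sum_(j in Om m) v j 0.
have s_gt0 : 0 < s.
  by rewrite /s (bigD1 i0) //= ltr_pwDl // sumr_ge0.
have Gv_ge i : (pbar m)^-1 * ne i (kk i) * s <= (Gm kk *m v) i 0.
  have := psi_network_mulmx kk m v i; rewrite v_eig mxE -/s => v_eig_i.
  have : rho * v i 0 <= v i 0 by rewrite ler_piMl.
  rewrite v_eig_i; lra.
have scale_ge0 : 0 <= pbar m / s by rewrite divr_ge0 // ltW.
exists ((pbar m / s) *: v); split.
- by move=> i; rewrite mxE mulr_ge0.
- move=> i; rewrite -scalemxAr mxE.
  have -> : ne i (kk i) = pbar m / s * ((pbar m)^-1 * ne i (kk i) * s).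
    by field; rewrite !gt_eqF.
  exact: ler_wpM2l.
- under eq_bigr do rewrite mxE.
  by rewrite -mulr_sumr -/s divfK ?gt_eqF.
Qed.

Lemma Gmat_semipositive kk : exists2 v : 'cV[R]_N,
  forall i, 0 < v i 0 & forall i, 0 < (Gm kk *m v) i 0.
Proof.
have [v [v_ge0 Gv_ge _]] := choice_feasible kk (Ordinal M_gt0).
have Gv_gt0 i : 0 < (Gm kk *m v) i 0 := lt_le_trans (n_elt_gt0 _ _) (Gv_ge i).
exists v => // i; apply: lt_le_trans (Gv_gt0 i) _.
by rewrite Gmat_mulmx a_row_mulmx_le.
Qed.

Lemma Gmat_monotone kk (w : 'cV[R]_N) :
  (forall i, 0 <= (Gm kk *m w) i 0) -> forall i, 0 <= w i 0.
Proof.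
have [v v_gt0 Gv_gt0] := Gmat_semipositive kk.
exact: (Zmatrix_monotone (Gmat_offdiag_le0 kk) v_gt0 Gv_gt0).
Qed.

Lemma Gmat_min_power kk : Gm kk *m min_power kk = nv kk.
Proof.
have [v v_gt0 Gv_gt0] := Gmat_semipositive kk.
by rewrite mulmxA mulmxV ?mul1mx // (Zmatrix_unit (Gmat_offdiag_le0 kk) v_gt0 Gv_gt0).
Qed.

Lemma min_power_ge0 kk i : 0 <= min_power kk i 0.
Proof.
by apply: (Gmat_monotone kk) => j; rewrite Gmat_min_power mxE ltW ?n_elt_gt0.
Qed.

Lemma min_power_le kk (v : 'cV[R]_N) :
  (forall i, ne i (kk i) <= (Gm kk *m v) i 0) -> forall i, min_power kk i 0 <= v i 0.
Proof.
move=> Gv_ge i; rewrite -subr_ge0.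
have w_ge0 : forall j, 0 <= (v - min_power kk) j 0.
  apply: (Gmat_monotone kk) => j.
  by rewrite mulmxBr Gmat_min_power; have := Gv_ge j; rewrite !mxE subr_ge0.
by have := w_ge0 i; rewrite !mxE.
Qed.

Lemma min_power_sum_le kk m : \sum_(i in Om m) min_power kk i 0 <= pbar m.
Proof.
have [v [_ Gv_ge v_sum]] := choice_feasible kk m.
by apply: le_trans v_sum; apply: ler_sum => i _; exact: min_power_le.
Qed.

Lemma min_power_switch_gt (f : receiver_choice) i k :
  (ar i k *m min_power f) 0 0 < ne i k ->
  \sum_j min_power f j 0 < \sum_j min_power (finfun (dfwith f k)) j 0.
Proof.
move=> row_violated; set f' := finfun (dfwith f k).
have f'_i : f' i = k by rewrite ffunE dfwith_in.
have f'_j j : j != i -> f' j = f j by move=> ji; rewrite ffunE dfwith_out // eq_sym.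
set w := min_power f' - min_power f.
have Gw_eq j : (Gm f' *m w) j 0 = ne j (f' j) - (ar j (f' j) *m min_power f) 0 0.
  by rewrite mulmxBr Gmat_min_power [LHS]mxE [X in _ + X]mxE Gmat_mulmx mxE.
(* only row i changed, and it was the violated one *)
have Gw_ge0 j : 0 <= (Gm f' *m w) j 0.
  rewrite Gw_eq; have [->|ji] := eqVneq j i; first by rewrite f'_i subr_ge0 ltW.
  by rewrite f'_j // -Gmat_mulmx Gmat_min_power mxE subrr.
have Gw_i_gt0 : 0 < (Gm f' *m w) i 0 by rewrite Gw_eq f'_i subr_gt0.
have w_ge0 := Gmat_monotone f' w Gw_ge0.
have sum_w_gt0 : 0 < \sum_j w j 0.
  rewrite lt_def sumr_ge0 // andbT; apply: contraTneq Gw_i_gt0 => /psumr_eq0P w0.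
  by rewrite mxE big1 ?ltxx // => j _; rewrite w0 ?mulr0.
have -> : \sum_j min_power f' j 0 = \sum_j min_power f j 0 + \sum_j w j 0.
  by rewrite -big_split; apply: eq_bigr => j _; rewrite /= !mxE addrC subrK.
by rewrite ltrDl.
Qed.

Lemma spectral_le1_feasible : exists p, feasible p.
Proof.
pose F (f : receiver_choice) := \sum_j min_power f j 0.
pose f0 : receiver_choice := finfun (fun i => Ordinal (K_gt0 i)).
have [fs _ fs_max] := @arg_maxP _ R _ f0 xpredT F isT.
exists (min_power fs); split; [exact: min_power_ge0 | exact: min_power_sum_le |].
move=> i k; rewrite leNgt; apply/negP => /min_power_switch_gt.
by apply/negP; rewrite -leNgt; exact: fs_max.
Qed.

End SpectralCondition.

End Network.

Theorem theorem6 (R : rcfType) (N : nat) (K : 'I_N -> nat)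
  (g : forall i : 'I_N, 'I_(K i) -> 'I_N -> R) (sigma2 : R)
  (M : nat) (Om : 'I_M -> {set 'I_N}) (pbar : 'I_M -> R) (mu : 'I_N -> R) :
  (forall i, (0 < K i)%N) ->
  (forall i k j, 0 <= g i k j) ->
  (forall i k, 0 < g i k i) ->
  0 < sigma2 ->
  (forall i, 0 < mu i) ->
  (forall kk : forall i : 'I_N, 'I_(K i),
      irreducible_mx R N (1%:M - Gmat R N K g mu kk)) ->
  (0 < M)%N ->
  (forall m, Om m != set0) ->
  (forall m, 0 < pbar m) ->
  (exists p : 'cV[R]_N,
      [/\ forall i, 0 <= p i 0,
          forall m, \sum_(i in Om m) p i 0 <= pbar m
        & A_ge_n R N K g sigma2 mu p])
  <->
  (forall (kk : forall i : 'I_N, 'I_(K i)) (m : 'I_M) (r : R),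
      spectral_radius R N
        (psi R N (1%:M - Gmat R N K g mu kk) ((pbar m)^-1 *: nG R N K g sigma2 mu kk) (Om m)) r ->
      r <= 1).
Proof.
move=> K_gt0 g_ge0 g_diag_gt0 sigma2_gt0 mu_gt0 I_G_irr M_gt0 Om_neq0 pbar_gt0.
split; first by case=> p; apply: feasible_spectral_le1.
by apply: spectral_le1_feasible.
Qed.
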